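(* Let $A_o,A_i\in\mathbb R^{n_y\times n_x}$, let $B_o,B_i\in\mathbb R^{n_y\times n_y}$ and $C_o,C_i\in\mathbb R^{n_x\times n_x}$ be invertible, and suppose the inclusion $y\in\{(A_o+B_o\Delta C_o)x:\|\Delta\|\le1\}$ contains the inclusion $y\in\{(A_i+B_i\Delta C_i)x:\|\Delta\|\le1\}$. Let $W_o=(\det(B_oB_o^T))^{1/(2n_y)}\|C_o\|_{\mathrm F}$ and $W_i=(\det(B_iB_i^T))^{1/(2n_y)}\|C_i\|_{\mathrm F}$. If $W_o=W_i$, then $A_o=A_i$ and there exists $\lambda>0$ such that $\lambda B_oB_o^T=B_iB_i^T$ and $C_o^TC_o=\lambda C_i^TC_i$.
   Context: $\|\cdot\|$ is the spectral norm, $\|\cdot\|_{\mathrm F}$ the Frobenius norm. An inclusion contains another if every pair $(x,y)\in\mathbb C^{n_x}\times\mathbb C^{n_y}$ satisfying the second also satisfies the first. *)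

From HB Require Import structures.
From mathcomp Require Import all_boot all_order all_algebra.
From mathcomp Require Import classical_sets reals exp.
From mathcomp Require Import complex.
Set Implicit Arguments. Unset Strict Implicit. Unset Printing Implicit Defensive.
Import Order.TTheory GRing.Theory Num.Theory.
Local Open Scope ring_scope.
Local Open Scope classical_set_scope.

Section Defs.
Variable R : realType.

Definition cvnorm (n : nat) (v : 'cV[R[i]]_n) : R :=
  Num.sqrt (\sum_k ((complex.Re (v k 0)) ^+ 2 + (complex.Im (v k 0)) ^+ 2)).

Definition specnorm (m n : nat) (D : 'M[R[i]]_(m, n)) : R :=
  sup [set cvnorm (D *m v) | v in [set v : 'cV[R[i]]_n | cvnorm v <= 1]].

Definition frobnorm (m n : nat) (M : 'M[R]_(m, n)) : R :=
  Num.sqrt (\sum_i \sum_j (M i j) ^+ 2).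

Definition cmx (m n : nat) (M : 'M[R]_(m, n)) : 'M[R[i]]_(m, n) :=
  map_mx (fun r : R => (r%:C)%C) M.

Definition in_inclusion (nx ny : nat) (A : 'M[R]_(ny, nx)) (B : 'M[R]_ny)
  (C : 'M[R]_nx) (x : 'cV[R[i]]_nx) (y : 'cV[R[i]]_ny) : Prop :=
  exists D : 'M[R[i]]_(ny, nx),
    specnorm D <= 1 /\ y = (cmx A + cmx B *m D *m cmx C) *m x.

Definition incl_contains (nx ny : nat)
  (Ao : 'M[R]_(ny, nx)) (Bo : 'M[R]_ny) (Co : 'M[R]_nx)
  (Ai : 'M[R]_(ny, nx)) (Bi : 'M[R]_ny) (Ci : 'M[R]_nx) : Prop :=
  forall x y, in_inclusion Ai Bi Ci x y -> in_inclusion Ao Bo Co x y.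

Definition incl_size (nx ny : nat) (B : 'M[R]_ny) (C : 'M[R]_nx) : R :=
  powR (\det (B *m B^T)) ((2 * ny)%:R^-1) * frobnorm C.

End Defs.

(* Fix a real x != 0 and put r_i = |C_i x|, r_o = |C_o x|. Real rank-one matrices of
   spectral norm at most 1 show that the inner inclusion reaches every point of the
   ellipsoid A_i x + r_i B_i (unit ball), while a real point of the outer inclusion
   is A_o x + B_o u with u real and |u| <= r_o. In the coordinates of the outer
   ellipsoid the inner one is c + M (unit ball) with M a contraction, so Hadamard's
   inequality for M^T M gives r_i^(2 n_y) det(B_i B_i^T) <= r_o^(2 n_y) det(B_o B_o^T),
   with equality only if c = 0 and M is orthogonal. Hence w_o C_o^T C_o - w_i C_i^T C_i
   is positive semidefinite, where w = det(B B^T)^(1/n_y); its trace is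
   W_o^2 - W_i^2 = 0, so it vanishes, and equality for every x yields A_o = A_i and
   the proportionality of B_o B_o^T and B_i B_i^T. *)

From HB Require Import structures.
From mathcomp Require Import all_boot all_order all_algebra.
From mathcomp Require Import classical_sets reals exp.
From mathcomp Require Import complex.
From mathcomp Require Import ring lra.
Set Implicit Arguments. Unset Strict Implicit. Unset Printing Implicit Defensive.
Import Order.TTheory GRing.Theory Num.Theory.
Local Open Scope ring_scope.

Section QuadraticForms.
Variable R : realFieldType.

Definition sqnorm n (v : 'cV[R]_n) := \sum_k v k 0 ^+ 2.
Definition bform n (S : 'M[R]_n) (u v : 'cV[R]_n) := (u^T *m S *m v) 0 0.
Definition qform n (S : 'M[R]_n) (v : 'cV[R]_n) := bform S v v.
Definition pos_semidef n (S : 'M[R]_n) := forall v, 0 <= qform S v.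
Definition pos_def n (S : 'M[R]_n) := forall v, v != 0 -> 0 < qform S v.

Lemma sqnorm_ge0 n (v : 'cV[R]_n) : 0 <= sqnorm v.
Proof. by apply: sumr_ge0 => k _; rewrite sqr_ge0. Qed.

Lemma sqnorm_eq0 n (v : 'cV[R]_n) : (sqnorm v == 0) = (v == 0).
Proof.
rewrite psumr_eq0 => [|k _]; last exact: sqr_ge0.
apply/allP/eqP => [v0|-> k _]; last by rewrite mxE expr0n eqxx.
apply/matrixP => i j; rewrite (ord1 j) mxE.
by have := v0 i (mem_index_enum _); rewrite sqrf_eq0 => /eqP.
Qed.

Lemma sqnorm0 n : sqnorm (0 : 'cV[R]_n) = 0.
Proof. by apply/eqP; rewrite sqnorm_eq0. Qed.

Lemma sqnorm_gt0 n (v : 'cV[R]_n) : (0 < sqnorm v) = (v != 0).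
Proof. by rewrite lt_def sqnorm_eq0 sqnorm_ge0 andbT. Qed.

Lemma sqnormZ n a (v : 'cV[R]_n) : sqnorm (a *: v) = a ^+ 2 * sqnorm v.
Proof. by rewrite /sqnorm mulr_sumr; apply: eq_bigr => k _; rewrite mxE exprMn. Qed.

Lemma sqnormN n (v : 'cV[R]_n) : sqnorm (- v) = sqnorm v.
Proof. by apply: eq_bigr => k _; rewrite mxE sqrrN. Qed.

Lemma sqnorm_parallelogram n (u v : 'cV[R]_n) :
  sqnorm (u + v) + sqnorm (u - v) = 2 * (sqnorm u + sqnorm v).
Proof.
rewrite /sqnorm -!big_split mulr_sumr; apply: eq_bigr => k _.
by rewrite !mxE /=; ring.
Qed.

Lemma sqnorm_delta n (i : 'I_n) : sqnorm (delta_mx i 0) = 1.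
Proof.
rewrite /sqnorm (bigD1 i) //= big1 => [|k /negbTE ki]; last by rewrite mxE ki expr0n.
by rewrite mxE !eqxx expr1n addr0.
Qed.

Lemma bformDl n (S : 'M[R]_n) u v w : bform S (u + v) w = bform S u w + bform S v w.
Proof. by rewrite /bform linearD !mulmxDl mxE. Qed.

Lemma bformDr n (S : 'M[R]_n) u v w : bform S w (u + v) = bform S w u + bform S w v.
Proof. by rewrite /bform mulmxDr mxE. Qed.

Lemma bformZl n (S : 'M[R]_n) a u w : bform S (a *: u) w = a * bform S u w.
Proof. by rewrite /bform linearZ -!scalemxAl mxE. Qed.

Lemma bformZr n (S : 'M[R]_n) a u w : bform S w (a *: u) = a * bform S w u.
Proof. by rewrite /bform -scalemxAr mxE. Qed.

Lemma bform_delta n (S : 'M[R]_n) i j : bform S (delta_mx i 0) (delta_mx j 0) = S i j.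
Proof. by rewrite /bform trmx_delta -rowE -colE !mxE. Qed.

Lemma qform_delta n (S : 'M[R]_n) i : qform S (delta_mx i 0) = S i i.
Proof. exact: bform_delta. Qed.

Lemma qformB n (S T : 'M[R]_n) v : qform (S - T) v = qform S v - qform T v.
Proof. by rewrite /qform /bform mulmxBr mulmxBl !mxE. Qed.

Lemma qformZ n a (S : 'M[R]_n) v : qform (a *: S) v = a * qform S v.
Proof. by rewrite /qform /bform -scalemxAr -scalemxAl mxE. Qed.

Lemma qform_mulTmx m n (M : 'M[R]_(m, n)) v : qform (M^T *m M) v = sqnorm (M *m v).
Proof.
rewrite /qform /bform !mulmxA -trmx_mul -mulmxA mxE.
by apply: eq_bigr => k _; rewrite mxE expr2.
Qed.

Lemma qform1 n (v : 'cV[R]_n) : qform 1%:M v = sqnorm v.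
Proof. by rewrite -[1%:M]mulmx1 -{1}trmx1 qform_mulTmx mul1mx. Qed.

Lemma qform_congr n (L S : 'M[R]_n) v : qform (L *m S *m L^T) v = qform S (L^T *m v).
Proof. by rewrite /qform /bform trmx_mul trmxK !mulmxA. Qed.

Lemma mulmx_unit_neq0 n (M : 'M[R]_n) (v : 'cV[R]_n) :
  M \in unitmx -> v != 0 -> M *m v != 0.
Proof. by move=> uM; apply: contra_neq => Mv0; rewrite -[v](mulKmx uM) Mv0 mulmx0. Qed.

Lemma pos_def_congr n (L S : 'M[R]_n) : L \in unitmx -> pos_def S -> pos_def (L *m S *m L^T).
Proof.
by move=> uL pdS v vn0; rewrite qform_congr pdS // mulmx_unit_neq0 ?unitmx_tr.
Qed.

Lemma pos_semidef_diag0 n (S : 'M[R]_n) :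
  S^T = S -> pos_semidef S -> (forall i, S i i = 0) -> S = 0.
Proof.
move=> sS psdS d0; apply/matrixP => i j; rewrite mxE.
have Sji : S j i = S i j by rewrite -[in LHS]sS mxE.
have cross t : 0 <= 2 * t * S i j.
  have := psdS (delta_mx i 0 + t *: delta_mx j 0).
  by rewrite /qform bformDl !bformDr !bformZl !bformZr !bform_delta !d0 Sji; lra.
by apply/eqP; rewrite eq_le; have := cross 1; have := cross (-1); lra.
Qed.

Lemma pos_semidef_tr0 n (S : 'M[R]_n) :
  S^T = S -> pos_semidef S -> \tr S = 0 -> S = 0.
Proof.
move=> sS psdS tr0; apply: pos_semidef_diag0 => // i.
have diag_ge0 k : 0 <= S k k by rewrite -qform_delta.
exact: (psumr_eq0P (fun k _ => diag_ge0 k) tr0).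
Qed.

Lemma schur_block n (a : R) (b : 'cV[R]_n) (S : 'M[R]_n) : a != 0 ->
  let L := block_mx 1%:M 0 (- a^-1 *: b) 1%:M in
  L *m block_mx a%:M b^T b S *m L^T = block_mx a%:M 0 0 (S - a^-1 *: (b *m b^T)).
Proof.
move=> a0 L; rewrite /L tr_block_mx !mulmx_block.
rewrite !(mul1mx, mulmx1, mul0mx, mulmx0, add0r, addr0, trmx0, trmx1).
rewrite mul_mx_scalar mul_scalar_mx.
have cancel_a p q (X : 'M[R]_(p, q)) : a *: (- a^-1 *: X) + X = 0.
  by rewrite scalerA mulrN mulfV // scaleN1r addNr.
rewrite cancel_a mul0mx add0r linearZ /= cancel_a -scalemxAl scaleNr.
by rewrite addrC.
Qed.

Lemma det_le_prod_diag n (S : 'M[R]_n) :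
  S^T = S -> pos_def S -> \det S <= \prod_i S i i.
Proof.
elim: n S => [|n IH] S sS pdS; first by rewrite det_mx00 big_ord0.
pose S' : 'M[R]_(1 + n) := S.
set a := S 0 0; set b := dlsubmx S'; set S1 := drsubmx S'.
have a_gt0 : 0 < a by rewrite /a -qform_delta pdS // -sqnorm_gt0 sqnorm_delta.
have defS : S' = block_mx a%:M b^T b S1.
  rewrite -[LHS]submxK -[ursubmx S']trmxK trmx_ursub sS; congr block_mx.
  by rewrite [ulsubmx S']mx11_scalar !mxE lshift0.
set S2 := S1 - a^-1 *: (b *m b^T).
have := schur_block b S1 (lt0r_neq0 a_gt0); rewrite -defS /=.
set L := block_mx _ _ _ _ => LSL.
have detL : \det L = 1 by rewrite det_lblock !det1 mulr1.
have uL : L \in unitmx by rewrite unitmxE detL unitr1.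
have detS : \det S = a * \det S2.
  have := congr1 determinant LSL; rewrite !det_mulmx det_tr detL mul1r mulr1.
  by rewrite det_lblock det_scalar expr1.
have sS2 : S2^T = S2 by rewrite /S2 linearB /= linearZ /= trmx_mul trmxK trmx_drsub sS.
have pdS2 : pos_def S2.
  move=> v vn0; have := pos_def_congr uL pdS (v := col_mx 0 v).
  rewrite LSL /qform /bform tr_col_mx mul_row_block mul_row_col.
  rewrite !(mul0mx, mulmx0, add0r, addr0, trmx0); apply.
  by apply: contra_neq vn0; rewrite -col_mx0 => /eq_col_mx [].
have S2_ge0 k : 0 <= S2 k k.
  by rewrite -qform_delta ltW // pdS2 // -sqnorm_gt0 sqnorm_delta.
have S2_le k : S2 k k <= S1 k k.
  rewrite /S2 !mxE gerBl // mulr_ge0 ?invr_ge0 ?(ltW a_gt0) //.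
  by apply: sumr_ge0 => j _; rewrite !mxE -expr2 sqr_ge0.
rewrite detS big_ord_recl ler_pM2l //; apply: le_trans (IH _ sS2 pdS2) _.
apply: ler_prod => k _; rewrite S2_ge0 /=.
by apply: le_trans (S2_le k) _; rewrite /S1 !mxE rshift1.
Qed.

Lemma det_mul_trmx m (A : 'M[R]_m) : \det (A *m A^T) = \det A ^+ 2.
Proof. by rewrite det_mulmx det_tr expr2. Qed.

Lemma det_gram m (A : 'M[R]_m) : \det (A^T *m A) = \det A ^+ 2.
Proof. by rewrite det_mulmx det_tr expr2. Qed.

Lemma gram_sym m n (M : 'M[R]_(m, n)) : (M^T *m M)^T = M^T *m M.
Proof. by rewrite trmx_mul trmxK. Qed.

Lemma gram_pos_def n (M : 'M[R]_n) : M \in unitmx -> pos_def (M^T *m M).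
Proof. by move=> uM v vn0; rewrite qform_mulTmx sqnorm_gt0 mulmx_unit_neq0. Qed.

Lemma gram_eq_of_le_tr m n (a b : R) (C D : 'M[R]_(m, n)) :
  (forall x, a * sqnorm (C *m x) <= b * sqnorm (D *m x)) ->
  a * \tr (C^T *m C) = b * \tr (D^T *m D) -> a *: (C^T *m C) = b *: (D^T *m D).
Proof.
move=> hle htr; apply/eqP; rewrite eq_sym -subr_eq0; apply/eqP.
apply: pos_semidef_tr0.
- by rewrite linearB !linearZ /= !gram_sym.
- by move=> v; rewrite qformB !qformZ !qform_mulTmx subr_ge0.
- by rewrite linearB !linearZ /= htr subrr.
Qed.

Section Contraction.
Variables (n : nat) (M : 'M[R]_n).
Hypothesis contrM : forall w, sqnorm (M *m w) <= sqnorm w.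

Lemma contraction_gram_diag i : 0 <= (M^T *m M) i i <= 1.
Proof. by rewrite -qform_delta qform_mulTmx sqnorm_ge0 -(sqnorm_delta i) contrM. Qed.

Lemma contraction_det_le1 : \det M ^+ 2 <= 1.
Proof.
have [->|] := eqVneq (\det M) 0; first by rewrite expr0n.
rewrite -unitfE -unitmxE => uM.
rewrite -det_gram; apply: le_trans (det_le_prod_diag (gram_sym M) (gram_pos_def uM)) _.
by apply: prodr_ile1 => i _; apply: contraction_gram_diag.
Qed.

Lemma contraction_det_eq1 : \det M ^+ 2 = 1 -> M^T *m M = 1%:M.
Proof.
move=> detM1; have uM : M \in unitmx.
  rewrite unitmxE unitfE; apply: contra_eq_neq detM1 => ->.
  by rewrite expr0n eq_sym oner_neq0.
have prod_ge1 : 1 <= \prod_i (M^T *m M) i i.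
  rewrite -[X in X <= _]detM1 -det_gram.
  exact: det_le_prod_diag (gram_sym M) (gram_pos_def uM).
have diag1 i : (M^T *m M) i i = 1.
  apply/eqP; rewrite eq_le (andP (contraction_gram_diag i)).2.
  apply: le_trans prod_ge1 _; rewrite (bigD1 i) //= ler_piMr //.
    exact: (andP (contraction_gram_diag i)).1.
  by apply: prodr_ile1 => k _; apply: contraction_gram_diag.
suff : 1%:M - M^T *m M = 0 by move/eqP; rewrite subr_eq0 eq_sym => /eqP.
apply: pos_semidef_diag0.
- by rewrite linearB /= trmx1 gram_sym.
- by move=> v; rewrite qformB qform1 qform_mulTmx subr_ge0.
- by move=> i; have := diag1 i; rewrite !mxE eqxx => ->; rewrite subrr.
Qed.

End Contraction.

Lemma sqnorm_shift_le m n (c : 'cV[R]_m) (M : 'M[R]_(m, n)) :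
  (forall w, sqnorm w <= 1 -> sqnorm (c + M *m w) <= 1) ->
  forall w, sqnorm w <= 1 -> sqnorm c + sqnorm (M *m w) <= 1.
Proof.
move=> hball w hw; have := sqnorm_parallelogram c (M *m w).
have := hball w hw; have := hball (- w); rewrite sqnormN mulmxN => /(_ hw).
lra.
Qed.

Lemma cauchy_schwarz n (a b : 'I_n -> R) :
  (\sum_k a k * b k) ^+ 2 <= (\sum_k a k ^+ 2) * (\sum_k b k ^+ 2).
Proof.
have expand x y : \sum_k (x * b k - y * a k) ^+ 2 =
    x * (x * \sum_k b k ^+ 2 - 2 * y * \sum_k a k * b k) + y ^+ 2 * \sum_k a k ^+ 2.
  rewrite !mulr_sumr -sumrB !mulr_sumr -big_split /=.
  by apply: eq_bigr => k _; ring.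
have [a0|an0] := eqVneq (\sum_k a k ^+ 2) 0.
  have ak0 k : a k = 0.
    apply/eqP; rewrite -sqrf_eq0; apply/eqP.
    by apply: (psumr_eq0P _ a0) => // j _; apply: sqr_ge0.
  by rewrite big1 ?a0 ?expr0n ?mul0r // => k _; rewrite ak0 mul0r.
set A := \sum_k a k ^+ 2 in an0 expand *; set P := \sum_k a k * b k in expand *.
set B := \sum_k b k ^+ 2 in expand *.
have A_gt0 : 0 < A by rewrite lt_def an0 sumr_ge0 // => k _; rewrite sqr_ge0.
have : 0 <= A * (A * B - P ^+ 2).
  have : 0 <= \sum_k (A * b k - P * a k) ^+ 2 by apply: sumr_ge0 => k _; apply: sqr_ge0.
  by rewrite expand; lra.
by rewrite pmulr_rge0 // subr_ge0.
Qed.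

End QuadraticForms.

Section Ellipsoids.
Variable R : rcfType.

Lemma sqnorm_mulmx_le m n (M : 'M[R]_(m, n)) :
  (forall w, sqnorm w <= 1 -> sqnorm (M *m w) <= 1) ->
  forall w, sqnorm (M *m w) <= sqnorm w.
Proof.
move=> hM w; have [->|wn0] := eqVneq w 0; first by rewrite mulmx0 !sqnorm0.
have s_gt0 : 0 < sqnorm w by rewrite sqnorm_gt0.
pose t := (Num.sqrt (sqnorm w))^-1.
have t2 : t ^+ 2 = (sqnorm w)^-1 by rewrite exprVn sqr_sqrtr // ltW.
have := hM (t *: w); rewrite -scalemxAr !sqnormZ t2 mulVf ?gt_eqF // lexx.
by rewrite ler_pdivrMl // mulr1 => /(_ isT).
Qed.

Lemma ellipsoid_sub n (a b : 'cV[R]_n) (A B : 'M[R]_n) : (0 < n)%N -> B \in unitmx ->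
  (forall w, sqnorm w <= 1 -> exists2 u, sqnorm u <= 1 & a + A *m w = b + B *m u) ->
  \det (A *m A^T) <= \det (B *m B^T) /\
  (\det (A *m A^T) = \det (B *m B^T) -> a = b /\ A *m A^T = B *m B^T).
Proof.
move=> n_gt0 uB hsub.
set M := invmx B *m A; set c := invmx B *m (a - b).
have defA : A = B *m M by rewrite mulmxA mulmxV // mul1mx.
have hball w : sqnorm w <= 1 -> sqnorm (c + M *m w) <= 1.
  move=> /hsub[u hu eq_u]; suff -> : c + M *m w = u by [].
  by rewrite -mulmxA -mulmxDr addrAC eq_u addrAC subrr add0r mulKmx.
have hcM := sqnorm_shift_le hball.
have contrM : forall w, sqnorm (M *m w) <= sqnorm w.
  by apply: sqnorm_mulmx_le => w /hcM; apply: le_trans; rewrite lerDr sqnorm_ge0.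
have detB_gt0 : 0 < \det (B *m B^T).
  by rewrite det_mul_trmx exprn_even_gt0 // -unitfE -unitmxE.
have detA : \det (A *m A^T) = \det M ^+ 2 * \det (B *m B^T).
  by rewrite defA !det_mul_trmx det_mulmx exprMn mulrC.
rewrite detA; split; first by rewrite ger_pMl // contraction_det_le1.
move=> /eqP; rewrite -{2}[\det (B *m B^T)]mul1r (inj_eq (mulIf (lt0r_neq0 detB_gt0))).
move=> /eqP /(contraction_det_eq1 contrM) MtM; split.
  have := hcM (delta_mx (Ordinal n_gt0) 0).
  rewrite -qform_mulTmx MtM qform1 sqnorm_delta lexx gerDr => /(_ isT) c_le0.
  have : c = 0 by apply/eqP; rewrite -sqnorm_eq0 eq_le c_le0 sqnorm_ge0.
  move=> /(congr1 (mulmx B)); rewrite mulKVmx // mulmx0 => /eqP.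
  by rewrite subr_eq0 => /eqP.
by rewrite defA trmx_mul mulmxA -(mulmxA B) (mulmx1C MtM) mulmx1.
Qed.

End Ellipsoids.

Section SpectralNorm.
Variable R : realType.
Import Normc.

Lemma normc_real (r : R) : normc (r%:C)%C = `|r|.
Proof. by rewrite /normc /= expr0n addr0 sqrtr_sqr. Qed.

Lemma normc_ge0 (z : R[i]) : 0 <= normc z.
Proof. by case: z => a b; apply: sqrtr_ge0. Qed.

Lemma normc_sum_le n (F : 'I_n -> R[i]) : normc (\sum_k F k) <= \sum_k normc (F k).
Proof. exact: (@ler_norm_sum R (Rcomplex R) _ _ F xpredT). Qed.

Lemma cvnormE n (v : 'cV[R[i]]_n) : cvnorm v = Num.sqrt (\sum_k normc (v k 0) ^+ 2).
Proof.
congr Num.sqrt; apply: eq_bigr => k _.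
by case: (v k 0) => a b; rewrite /normc sqr_sqrtr // addr_ge0 ?sqr_ge0.
Qed.

Lemma cvnorm_le1 n (v : 'cV[R[i]]_n) : (cvnorm v <= 1) = (\sum_k normc (v k 0) ^+ 2 <= 1).
Proof. by rewrite cvnormE -{1}sqrtr1 ler_sqrt. Qed.

Lemma cvnorm0 n : cvnorm (0 : 'cV[R[i]]_n) = 0.
Proof. by rewrite cvnormE big1 ?sqrtr0 // => k _; rewrite mxE normc0 expr0n. Qed.

Lemma cmxM m n p (A : 'M[R]_(m, n)) (B : 'M[R]_(n, p)) : cmx (A *m B) = cmx A *m cmx B.
Proof. exact: (map_mxM (real_complex R)). Qed.

Lemma cmxD m n (A B : 'M[R]_(m, n)) : cmx (A + B) = cmx A + cmx B.
Proof. exact: (map_mxD (real_complex R)). Qed.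

Lemma cmxZ m n (a : R) (A : 'M[R]_(m, n)) : cmx (a *: A) = (a%:C)%C *: cmx A.
Proof. exact: (map_mxZ (real_complex R)). Qed.

Lemma cmx0 m n : cmx (0 : 'M[R]_(m, n)) = 0.
Proof. exact: (map_mx0 (real_complex R)). Qed.

Lemma cmxB m n (A B : 'M[R]_(m, n)) : cmx (A - B) = cmx A - cmx B.
Proof. exact: (map_mxB (real_complex R)). Qed.

Lemma cmx_invmx n (A : 'M[R]_n) : cmx (invmx A) = invmx (cmx A).
Proof. exact: (map_invmx (real_complex R)). Qed.

Lemma cmx_unitmx n (A : 'M[R]_n) : (cmx A \in unitmx) = (A \in unitmx).
Proof. exact: (map_unitmx (real_complex R)). Qed.

Lemma cmx_inj m n : injective (@cmx R m n).
Proof. exact: (@map_mx_inj _ _ (real_complex R)). Qed.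

Lemma cvnorm_cmx n (v : 'cV[R]_n) : cvnorm (cmx v) = Num.sqrt (sqnorm v).
Proof.
rewrite cvnormE; congr Num.sqrt; apply: eq_bigr => k _.
by rewrite mxE normc_real real_normK ?num_real.
Qed.

Lemma specnorm_le m n (D : 'M[R[i]]_(m, n)) k :
  (forall v, cvnorm v <= 1 -> cvnorm (D *m v) <= k) -> specnorm D <= k.
Proof.
move=> hD; apply: ge_sup => [|_ [v hv <-]]; last exact: hD.
by exists (cvnorm (D *m 0)), 0 => //=; rewrite cvnorm0 ler01.
Qed.

Lemma cvnorm_mulmx_le m n (D : 'M[R[i]]_(m, n)) v :
  cvnorm v <= 1 -> cvnorm (D *m v) <= specnorm D.
Proof.
move=> hv; apply: ub_le_sup; last by exists v.
exists (Num.sqrt (\sum_i (\sum_j normc (D i j)) ^+ 2)) => _ [u hu <-].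
rewrite cvnormE ler_wsqrtr // ler_sum // => i _.
rewrite lerXn2r ?nnegrE ?normc_ge0 //; first by rewrite sumr_ge0 // => j _; apply: normc_ge0.
have u_le1 j : normc (u j 0) <= 1.
  have hu' : \sum_k normc (u k 0) ^+ 2 <= 1 by rewrite -cvnorm_le1.
  rewrite -(expr_le1 (_ : 0 < 2)%N) ?normc_ge0 //; apply: le_trans hu'.
  by rewrite (bigD1 j) //= lerDl sumr_ge0 // => k _; apply: sqr_ge0.
rewrite mxE; apply: le_trans (normc_sum_le _) _; apply: ler_sum => j _.
by rewrite normcM ler_piMr ?normc_ge0.
Qed.

Lemma sqnorm_le_specnorm1 m n (D : 'M[R[i]]_(m, n)) (z : 'cV[R]_n) (u : 'cV[R]_m) :
  specnorm D <= 1 -> D *m cmx z = cmx u -> sqnorm u <= sqnorm z.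
Proof.
move=> hD Dzu; have [z0|zn0] := eqVneq z 0.
  move: Dzu; rewrite z0 cmx0 mulmx0 -(cmx0 m 1) => /cmx_inj <-.
  by rewrite !sqnorm0.
have z_gt0 : 0 < sqnorm z by rewrite sqnorm_gt0.
pose t := (Num.sqrt (sqnorm z))^-1.
have t2 : t ^+ 2 = (sqnorm z)^-1 by rewrite exprVn sqr_sqrtr // ltW.
have := @cvnorm_mulmx_le _ _ D (cmx (t *: z)).
rewrite !cmxZ -scalemxAr Dzu -!cmxZ !cvnorm_cmx !sqnormZ t2 mulVf ?gt_eqF // sqrtr1 lexx.
by move=> /(_ isT) /le_trans /(_ hD); rewrite -sqrtr1 ler_sqrt // ler_pdivrMl // mulr1.
Qed.

Lemma normc_dot_le n (z : 'cV[R]_n) (v : 'cV[R[i]]_n) :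
  normc ((cmx z^T *m v) 0 0) ^+ 2 <= sqnorm z * \sum_k normc (v k 0) ^+ 2.
Proof.
set S := \sum_k `|z k 0| * normc (v k 0).
have dot_le : normc ((cmx z^T *m v) 0 0) <= S.
  rewrite mxE; apply: le_trans (normc_sum_le _) _; apply: ler_sum => k _.
  by rewrite normcM !mxE normc_real.
have sq_le : normc ((cmx z^T *m v) 0 0) ^+ 2 <= S ^+ 2.
  by rewrite lerXn2r ?nnegrE ?normc_ge0 ?(le_trans (normc_ge0 _) dot_le).
apply: le_trans sq_le (le_trans (cauchy_schwarz _ _) _).
suff -> : \sum_k `|z k 0| ^+ 2 = sqnorm z by [].
by apply: eq_bigr => k _; rewrite real_normK ?num_real.
Qed.

Lemma rank1_contraction m n (z : 'cV[R]_n) (w : 'cV[R]_m) :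
  sqnorm w <= sqnorm z ->
  exists2 D : 'M[R[i]]_(m, n), specnorm D <= 1 & D *m cmx z = cmx w.
Proof.
move=> wz; have [z0|zn0] := eqVneq z 0.
  have w0 : w = 0.
    by apply/eqP; rewrite -sqnorm_eq0 eq_le sqnorm_ge0 andbT -(sqnorm0 _ n) -z0.
  exists 0; last by rewrite w0 z0 !cmx0 mulmx0.
  by apply: specnorm_le => v _; rewrite mul0mx cvnorm0 ler01.
have z_gt0 : 0 < sqnorm z by rewrite sqnorm_gt0.
set s := sqnorm z in wz z_gt0 *.
exists (cmx (s^-1 *: (w *m z^T))); last first.
  have ztz : z^T *m z = s%:M by rewrite [LHS]mx11_scalar /s -qform1 /qform /bform mulmx1.
  rewrite -cmxM -scalemxAl -mulmxA ztz mul_mx_scalar scalerA.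
  by rewrite mulVf ?gt_eqF // scale1r.
apply: specnorm_le => v; rewrite !cvnorm_le1 => hv.
set d := (cmx z^T *m v) 0 0.
have entry i : normc ((cmx (s^-1 *: (w *m z^T)) *m v) i 0) ^+ 2 =
    s^-1 ^+ 2 * w i 0 ^+ 2 * normc d ^+ 2.
  rewrite scalemxAl cmxM -mulmxA mxE big_ord1 mxE normcM normc_real.
  by rewrite !exprMn real_normK ?num_real // mxE exprMn.
rewrite (eq_bigr _ (fun i _ => entry i)) -mulr_suml -mulr_sumr.
have d_le : normc d ^+ 2 <= s.
  exact: le_trans (normc_dot_le z v) (ler_piMr (ltW z_gt0) hv).
have -> : 1 = s^-1 ^+ 2 * s * s by field; rewrite gt_eqF.
apply: ler_pM; rewrite ?mulr_ge0 ?sqnorm_ge0 ?normc_ge0 ?invr_ge0 ?(ltW z_gt0) //.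
by rewrite ler_pM2l // exprn_gt0 // invr_gt0.
Qed.

End SpectralNorm.

Section Inclusion.
Variable R : realType.

Lemma frobnorm_sqr m n (C : 'M[R]_(m, n)) : frobnorm C ^+ 2 = \tr (C^T *m C).
Proof.
rewrite /frobnorm sqr_sqrtr; last by do 2!(apply: sumr_ge0 => ? _); apply: sqr_ge0.
rewrite /mxtrace exchange_big; apply: eq_bigr => j _; rewrite mxE.
by apply: eq_bigr => i _; rewrite mxE expr2.
Qed.

Definition detroot n (B : 'M[R]_n) := \det (B *m B^T) `^ ((2 * n)%:R^-1).

Lemma detroot_gt0 n (B : 'M[R]_n) : B \in unitmx -> 0 < detroot B.
Proof.
by move=> uB; rewrite powR_gt0 // det_mul_trmx exprn_even_gt0 // -unitfE -unitmxE.
Qed.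

Lemma detroot_sqrX n (B : 'M[R]_n) : (0 < n)%N -> (detroot B ^+ 2) ^+ n = \det (B *m B^T).
Proof.
move=> n_gt0; have det_ge0 : 0 <= \det (B *m B^T) by rewrite det_mul_trmx sqr_ge0.
rewrite -exprM -powR_mulrn ?powR_ge0 // -powRrM mulVf ?powRr1 //.
by rewrite pnatr_eq0 muln_eq0 negb_or /= -lt0n.
Qed.

Variables (nx ny : nat) (Ao Ai : 'M[R]_(ny, nx)) (Bo Bi : 'M[R]_ny) (Co Ci : 'M[R]_nx).
Hypotheses (hBo : Bo \in unitmx) (hCo : Co \in unitmx) (ny_gt0 : (0 < ny)%N).
Hypothesis hincl : incl_contains Ao Bo Co Ai Bi Ci.

Lemma incl_contains_ball x w : sqnorm w <= sqnorm (Ci *m x) ->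
  exists2 u, sqnorm u <= sqnorm (Co *m x) & Ai *m x + Bi *m w = Ao *m x + Bo *m u.
Proof.
move=> hw; have [D hD Dw] := rank1_contraction hw.
have [D' [hD' outer]] : in_inclusion Ao Bo Co (cmx x) (cmx (Ai *m x + Bi *m w)).
  apply: hincl; exists D; split => //.
  by rewrite mulmxDl -!mulmxA -[cmx Ci *m _]cmxM Dw -!cmxM -cmxD.
set u := invmx Bo *m (Ai *m x + Bi *m w - Ao *m x).
exists u; last by rewrite mulKVmx // [RHS]addrC subrK.
apply: sqnorm_le_specnorm1 hD' _.
have Bo_u : cmx Bo *m (D' *m cmx (Co *m x)) = cmx (Ai *m x + Bi *m w - Ao *m x).
  by rewrite cmxB outer mulmxDl -cmxM addrAC subrr add0r cmxM !mulmxA.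
by rewrite /u [RHS]cmxM cmx_invmx -Bo_u mulKmx // cmx_unitmx.
Qed.

Lemma incl_contains_ellipsoid x : Co *m x != 0 ->
  sqnorm (Ci *m x) ^+ ny * \det (Bi *m Bi^T) <= sqnorm (Co *m x) ^+ ny * \det (Bo *m Bo^T) /\
  (sqnorm (Ci *m x) ^+ ny * \det (Bi *m Bi^T) = sqnorm (Co *m x) ^+ ny * \det (Bo *m Bo^T) ->
   Ai *m x = Ao *m x /\ sqnorm (Ci *m x) *: (Bi *m Bi^T) = sqnorm (Co *m x) *: (Bo *m Bo^T)).
Proof.
move=> Cx_neq0; set si := sqnorm (Ci *m x); set so := sqnorm (Co *m x).
have si_ge0 : 0 <= si by apply: sqnorm_ge0.
have so_gt0 : 0 < so by rewrite sqnorm_gt0.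
set ri := Num.sqrt si; set ro := Num.sqrt so.
have ro_gt0 : 0 < ro by rewrite sqrtr_gt0.
have gramZ r (B : 'M[R]_ny) : (r *: B) *m (r *: B)^T = r ^+ 2 *: (B *m B^T).
  by rewrite linearZ /= -scalemxAl -scalemxAr scalerA expr2.
have hsub w : sqnorm w <= 1 ->
    exists2 u, sqnorm u <= 1 & Ai *m x + (ri *: Bi) *m w = Ao *m x + (ro *: Bo) *m u.
  move=> hw; have [|u hu eq_u] := @incl_contains_ball x (ri *: w).
    by rewrite sqnormZ sqr_sqrtr // ler_piMr.
  exists (ro^-1 *: u).
    by rewrite sqnormZ exprVn sqr_sqrtr ?(ltW so_gt0) // ler_pdivrMl // mulr1.
  by rewrite -!scalemxAl !scalemxAr scalerA mulfV ?gt_eqF // scale1r.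
have uBo' : ro *: Bo \in unitmx by rewrite unitmxZ // unitfE gt_eqF.
have [det_le det_eq] := ellipsoid_sub ny_gt0 uBo' hsub.
by rewrite !gramZ !detZ !sqr_sqrtr ?(ltW so_gt0) // in det_le det_eq.
Qed.

Lemma incl_contains_detroot_le x :
  detroot Bi ^+ 2 * sqnorm (Ci *m x) <= detroot Bo ^+ 2 * sqnorm (Co *m x).
Proof.
have [->|xn0] := eqVneq x 0; first by rewrite !mulmx0 !sqnorm0 !mulr0.
have Cx_neq0 := mulmx_unit_neq0 hCo xn0.
rewrite -(ler_pXn2r ny_gt0) ?nnegrE ?mulr_ge0 ?sqnorm_ge0 ?powR_ge0 //.
rewrite ![(_ * sqnorm _) ^+ _]exprMn !detroot_sqrX // mulrC [X in _ <= X]mulrC.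
exact: (incl_contains_ellipsoid Cx_neq0).1.
Qed.

Lemma incl_contains_detroot_eq x : x != 0 ->
  detroot Bi ^+ 2 * sqnorm (Ci *m x) = detroot Bo ^+ 2 * sqnorm (Co *m x) ->
  Ai *m x = Ao *m x /\ detroot Bo ^+ 2 *: (Bi *m Bi^T) = detroot Bi ^+ 2 *: (Bo *m Bo^T).
Proof.
move=> xn0 eq_x; have Cx_neq0 := mulmx_unit_neq0 hCo xn0.
have [_] := incl_contains_ellipsoid Cx_neq0; case=> [|-> EB].
  have := congr1 (fun t => t ^+ ny) eq_x.
  by rewrite /= ![(_ * sqnorm _) ^+ _]exprMn !detroot_sqrX // mulrC [RHS]mulrC.
split=> //; apply: (scalerI (_ : sqnorm (Co *m x) != 0)); first by rewrite sqnorm_eq0.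
by rewrite scalerA mulrC -eq_x -scalerA EB scalerA mulrC -scalerA.
Qed.

End Inclusion.

Unset Implicit Arguments.
Set Strict Implicit.
Set Printing Implicit Defensive.

Theorem proposition4 (R : realType) (nx ny : nat)
  (hnx : (0 < nx)%N) (hny : (0 < ny)%N)
  (Ao Ai : 'M[R]_(ny, nx)) (Bo Bi : 'M[R]_ny) (Co Ci : 'M[R]_nx)
  (hBo : Bo \in unitmx) (hBi : Bi \in unitmx)
  (hCo : Co \in unitmx) (hCi : Ci \in unitmx)
  (hincl : incl_contains Ao Bo Co Ai Bi Ci)
  (hW : incl_size Bo Co = incl_size Bi Ci) :
  Ao = Ai /\
  exists lambda : R, 0 < lambda /\
    lambda *: (Bo *m Bo^T) = Bi *m Bi^T /\
    Co^T *m Co = lambda *: (Ci^T *m Ci).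
Proof.
(* [hCi] is redundant: [Ci^T *m Ci] turns out to be a positive multiple of [Co^T *m Co]. *)
have trC : detroot Bi ^+ 2 * \tr (Ci^T *m Ci) = detroot Bo ^+ 2 * \tr (Co^T *m Co).
  by rewrite -!frobnorm_sqr -!exprMn; congr (_ ^+ 2); exact: (esym hW).
set ko := detroot Bo ^+ 2 in trC *; set ki := detroot Bi ^+ 2 in trC *.
have ko_neq0 : ko != 0 by rewrite expf_neq0 // gt_eqF // detroot_gt0.
have hC := gram_eq_of_le_tr (incl_contains_detroot_le hBo hCo hny hincl) trC.
have heq x : ki * sqnorm (Ci *m x) = ko * sqnorm (Co *m x).
  by rewrite -!qform_mulTmx -!qformZ hC.
have e_neq0 (j : 'I_nx) : delta_mx j 0 != 0 :> 'cV[R]_nx.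
  by rewrite -sqnorm_gt0 sqnorm_delta ltr01.
split.
  apply/matrixP => i j.
  have [eqA _] := incl_contains_detroot_eq hBo hCo hny hincl (e_neq0 j) (heq _).
  by have := congr1 (fun v : 'cV_ny => v i 0) eqA; rewrite /= -!colE !mxE.
have [_ eqB] := incl_contains_detroot_eq hBo hCo hny hincl (e_neq0 (Ordinal hnx)) (heq _).
exists (ki / ko); split; first by rewrite divr_gt0 ?exprn_gt0 ?detroot_gt0.
split; apply: (scalerI ko_neq0).
  by rewrite scalerA mulrC divfK // eqB.
by rewrite -hC scalerA mulrC divfK.
Qed.
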